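(* Let $H$ be a real Hilbert space, $A:D(A)\subset H\to H$ a linear, self-adjoint, positive, unbounded operator with compact inverse, eigenvalues $0<\lambda_1\le\lambda_2\le\dots$ and orthonormal eigenbasis $\{e_n\}$, $H^s:=D(A^{s/2})$, $\alpha\in[0,1)$, and $f:H^\alpha\to H^{-\alpha}$ with $\|f(u)\|_{H^{-\alpha}}\le C$ and $\|f(u_1)-f(u_2)\|_{H^{-\alpha}}\le L\|u_1-u_2\|_{H^\alpha}$ for all $u,u_1,u_2\in H^\alpha$. Let $g\in H^{-\alpha}$ be such that the set of equilibria of $\partial_t u+Au-f(u)=g$ is finite; let $S(t)$ be its solution semigroup on $H$ and $\mathcal{A}$ its global attractor. Let $N\in\mathbb{N}$ satisfy $L<\lambda_{N+1}^{1-\alpha}$ and let $P_N$ be the orthogonal projector onto $\mathrm{span}\{e_1,\dots,e_N\}$. Let $F:H\to\mathbb{R}$ be continuous, $\tau>0$, $k\in\mathbb{N}$, such that $F(k,u):=(F(u),F(S(\tau)u),\dots,F(S((k-1)\tau)u))$ is injective on $\mathcal{A}$; set $\bar{\mathcal{A}}:=F(k,\mathcal{A})\subset\mathbb{R}^k$, $\Theta(\xi):=S(k\tau)\big(F(k,\cdot)|_{\mathcal{A}}\big)^{-1}(\xi)$ for $\xi\in\bar{\mathcal{A}}$, and let $\Theta_N:\mathbb{R}^k\to P_NH$ be any continuous extension of $\xi\mapsto P_N\Theta(\xi)$ from $\bar{\mathcal{A}}$. Let $u:\mathbb{R}\to\mathcal{A}$ be a complete trajectory on the attractor. Then there exists $K_0$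 such that for every $K>K_0$ there is $\beta>0$ (independent of $u$ and $v$) such that every solution $v$ of $$\partial_t v+Av-f(v)+K\Big(P_Nv(t)-\Theta_N\big(F(u(t-k\tau)),\dots,F(u(t-\tau))\big)\Big)=g,\qquad t\ge0,$$ with $v(0)\in H$ satisfies $\|v(t)-u(t)\|_H\le\|v(0)-u(0)\|_He^{-\beta t}$ for all $t\ge0$.
   Context: A complete trajectory on $\mathcal{A}$ is a map $u:\mathbb{R}\to\mathcal{A}$ with $S(t)u(s)=u(t+s)$ for $s\in\mathbb{R}$, $t\ge0$. The global attractor $\mathcal{A}$ of the (dissipative) solution semigroup is compact, so $F(k,\cdot)$ is a homeomorphism from $\mathcal{A}$ onto $\bar{\mathcal{A}}$ and $\Theta$ is continuous; a continuous extension $\Theta_N$ exists by the Tietze extension theorem. *)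

From Stdlib Require Import Reals Lra List.
From Coquelicot Require Import Coquelicot.
Open Scope R_scope.

(* Spectral model: H = l^2(N) via the orthonormal eigenbasis (e_n) of A,
   A e_n = lam n e_n (0-indexed: lam 0 = lambda_1).  An element of H is its
   coefficient sequence. *)

Definition hseq := nat -> R.

Definition seq_sub (u v : hseq) : hseq := fun n => u n - v n.

Definition inHs (lam : hseq) (s : R) (u : hseq) : Prop :=
  ex_series (fun n => Rpower (lam n) s * (u n) ^ 2).

Definition normHs (lam : hseq) (s : R) (u : hseq) : R :=
  sqrt (Series (fun n => Rpower (lam n) s * (u n) ^ 2)).

Definition inH (u : hseq) : Prop := ex_series (fun n => (u n) ^ 2).

Definition normH (u : hseq) : R := sqrt (Series (fun n => (u n) ^ 2)).

(* A: linear, self-adjoint, positive, unbounded, compact inverse, with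
   eigenvalues 0 < lam_1 <= lam_2 <= ... (tending to infinity). *)
Definition spectrum_ok (lam : hseq) : Prop :=
  0 < lam O /\ (forall n, lam n <= lam (Datatypes.S n)) /\
  (forall M, exists n, M < lam n).

Definition PN (N : nat) (u : hseq) : hseq :=
  fun n => if Nat.ltb n N then u n else 0.

(* (weak) solution on [0,oo) of  v' + A v - f(v) + h(t) = g  *)
Definition is_solution (lam : hseq) (alpha : R) (f : hseq -> hseq) (g : hseq)
    (h : R -> hseq) (v : R -> hseq) : Prop :=
  (forall t, 0 <= t -> inH (v t)) /\
  (forall t, 0 <= t -> forall eps, 0 < eps -> exists delta, 0 < delta /\
     forall s, 0 <= s -> Rabs (s - t) < delta -> normH (seq_sub (v s) (v t)) < eps) /\
  (forall t, 0 < t -> inHs lam alpha (v t)) /\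
  (forall t, 0 < t -> forall eps, 0 < eps -> exists delta, 0 < delta /\
     forall s, 0 < s -> Rabs (s - t) < delta ->
       normHs lam alpha (seq_sub (v s) (v t)) < eps) /\
  (* v in L^2_loc([0,oo); H^1) *)
  (forall T, 0 < T -> exists M, forall m,
     RInt (fun s => sum_f_R0 (fun n => lam n * (v s n) ^ 2) m) 0 T <= M) /\
  (* the equation, tested against each e_n, in integrated form *)
  (forall n t, 0 <= t ->
     ex_RInt (fun s => - lam n * v s n + f (v s) n + g n - h s n) 0 t /\
     v t n - v 0 n = RInt (fun s => - lam n * v s n + f (v s) n + g n - h s n) 0 t).

Definition is_equilibrium (lam : hseq) (alpha : R) (f : hseq -> hseq) (g : hseq)
    (e : hseq) : Prop :=
  inHs lam alpha e /\ forall n, lam n * e n - f e n = g n.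

Definition is_global_attractor (Sg : R -> hseq -> hseq) (Att : hseq -> Prop) : Prop :=
  (forall x, Att x -> inH x) /\
  (forall x : nat -> hseq, (forall m, Att (x m)) ->
     exists phi : nat -> nat, (forall m, (phi m < phi (Datatypes.S m))%nat) /\
       exists y, Att y /\ forall eps, 0 < eps -> exists M, forall m, (M <= m)%nat ->
         normH (seq_sub (x (phi m)) y) < eps) /\
  (forall t, 0 <= t -> forall y, Att y <-> exists x, Att x /\ Sg t x = y) /\
  (forall B : hseq -> Prop, (forall x, B x -> inH x) ->
     (exists r, forall x, B x -> normH x <= r) ->
     forall eps, 0 < eps -> exists T, forall t, T <= t -> forall x, B x ->
       exists y, Att y /\ normH (seq_sub (Sg t x) y) < eps).

From Stdlib Require Import Reals Lra Lia List FunctionalExtensionality Classical.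
From Coquelicot Require Import Coquelicot.
Open Scope R_scope.

(* Let U(t) = S(t) u(0), which is u(t) for t >= 0. On the attractor the delayed
   observations reproduce P_N u(t), so the feedback is K P_N (v - U) and the
   difference W = v - U satisfies, mode by mode,
     W_n' = - (lam_n + K [n < N]) W_n + (f(v) - f(U))_n.
   Since |f(v) - f(U)|_{H^-alpha} <= L |W|_{H^alpha}, Young's inequality absorbs
   the nonlinearity into the damping as soon as lam_n + K [n < N] - L' lam_n^alpha
   >= beta > 0 for every n, which holds for some L' > L when L < lam_N^(1-alpha)
   and K > lam_N; then |W(t)|_H decays like exp (- beta t). The energy identity is
   only available for finitely many modes: on partial sums it holds up to the
   H^alpha tail of W, which is uniformly small on compact subintervals of
   (0, oo) because W is continuous into H^alpha there. The estimate reaches t = 0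
   by continuity of W in H. *)

Lemma Rpower_pos x y : 0 < Rpower x y.
Proof. apply exp_pos. Qed.

Lemma Rpower_0_r x : Rpower x 0 = 1.
Proof. unfold Rpower; rewrite Rmult_0_l; apply exp_0. Qed.

Lemma sq_le_of_sq_le (x y : R) : 0 <= y -> x ^ 2 <= y ^ 2 -> x <= y.
Proof. intros Hy Hxy; nra. Qed.

Lemma sq_sub_le_young (x y eta : R) : 0 < eta ->
  (x - y) ^ 2 <= (1 + eta) * x ^ 2 + (1 + / eta) * y ^ 2.
Proof.
  intros Heta; apply Rmult_le_reg_l with eta; [exact Heta|].
  replace (eta * ((1 + eta) * x ^ 2 + (1 + / eta) * y ^ 2))
    with (eta * (x - y) ^ 2 + (eta * x + y) ^ 2) by (field; lra).
  pose proof (pow2_ge_0 (eta * x + y)); lra.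
Qed.

Lemma Series_nonneg (a : nat -> R) : (forall n, 0 <= a n) -> ex_series a -> 0 <= Series a.
Proof.
  intros Ha Hex.
  replace 0 with (Series (fun _ => 0 * 0)) by (rewrite Series_scal_l; ring).
  apply Series_le; [intros n; split; [lra | rewrite Rmult_0_l; apply Ha] | exact Hex].
Qed.

(** * Weighted sequence spaces *)

Definition shift (M : nat) (x : hseq) : hseq := fun k => x (M + k)%nat.

Section HilbertScale.

Variables (lam : hseq) (s : R).

Lemma Hs_term_nonneg (x : hseq) n : 0 <= Rpower (lam n) s * x n ^ 2.
Proof. apply Rmult_le_pos; [left; apply Rpower_pos | apply pow2_ge_0]. Qed.

Lemma normHs_nonneg (x : hseq) : 0 <= normHs lam s x.
Proof. apply sqrt_pos. Qed.

Lemma normHs_sq (x : hseq) : inHs lam s x ->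
  normHs lam s x ^ 2 = Series (fun n => Rpower (lam n) s * x n ^ 2).
Proof.
  intros Hx; apply pow2_sqrt, Series_nonneg; [apply Hs_term_nonneg | exact Hx].
Qed.

Lemma normHs_sub_comm (x y : hseq) : normHs lam s (seq_sub x y) = normHs lam s (seq_sub y x).
Proof. unfold normHs, seq_sub; f_equal; apply Series_ext; intros n; ring. Qed.

Lemma inHs_sub (x y : hseq) : inHs lam s x -> inHs lam s y -> inHs lam s (seq_sub x y).
Proof.
  intros Hx Hy.
  apply (ex_series_le (V := R_CompleteNormedModule) _
           (fun n => 2 * (Rpower (lam n) s * x n ^ 2) + 2 * (Rpower (lam n) s * y n ^ 2))).
  - intros n; rewrite Rabs_pos_eq by apply Hs_term_nonneg; unfold seq_sub.
    pose proof (sq_sub_le_young (x n) (y n) 1 Rlt_0_1) as Hyoung.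
    pose proof (Rpower_pos (lam n) s); rewrite Rinv_1 in Hyoung; nra.
  - apply (ex_series_plus (fun n => 2 * _) (fun n => 2 * _));
      apply (ex_series_scal_l (V := R_NormedModule) 2); assumption.
Qed.

Lemma normHs_sub_sq_le (x y : hseq) (eta : R) : 0 < eta -> inHs lam s x -> inHs lam s y ->
  normHs lam s (seq_sub x y) ^ 2
    <= (1 + eta) * normHs lam s x ^ 2 + (1 + / eta) * normHs lam s y ^ 2.
Proof.
  intros Heta Hx Hy.
  rewrite !normHs_sq by (try apply inHs_sub; assumption).
  rewrite <- !Series_scal_l, <- Series_plus
    by (apply (ex_series_scal_l (V := R_NormedModule)); assumption).
  apply Series_le.
  - intros n; split; [apply Hs_term_nonneg|]; unfold seq_sub.
    pose proof (sq_sub_le_young (x n) (y n) eta Heta); pose proof (Rpower_pos (lam n) s); nra.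
  - apply (ex_series_plus (fun n => _ * _) (fun n => _ * _));
      apply (ex_series_scal_l (V := R_NormedModule)); assumption.
Qed.

(* Young's inequality with eta = |y| / |x| is the triangle inequality; eta is
   perturbed by e to keep it finite and positive. *)
Lemma normHs_sub_le (x y : hseq) : inHs lam s x -> inHs lam s y ->
  normHs lam s (seq_sub x y) <= normHs lam s x + normHs lam s y.
Proof.
  intros Hx Hy; apply Rle_plus_epsilon; intros e He.
  set (a := normHs lam s x); set (b := normHs lam s y).
  assert (Ha : 0 <= a) by apply normHs_nonneg; assert (Hb : 0 <= b) by apply normHs_nonneg.
  set (A := a + e / 2); set (B := b + e / 2).
  assert (HA : 0 < A) by (unfold A; lra); assert (HB : 0 < B) by (unfold B; lra).
  apply sq_le_of_sq_le; [unfold A, B in *; lra|].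
  eapply Rle_trans; [apply (normHs_sub_sq_le x y (B / A)); auto; apply Rdiv_lt_0_compat; lra|].
  fold a b; replace (/ (B / A)) with (A / B) by (field; lra).
  assert (HBA : 0 < B / A) by (apply Rdiv_lt_0_compat; lra).
  assert (HAB : 0 < A / B) by (apply Rdiv_lt_0_compat; lra).
  apply Rle_trans with ((1 + B / A) * A ^ 2 + (1 + A / B) * B ^ 2).
  - apply Rplus_le_compat; apply Rmult_le_compat_l; try lra; apply pow_incr; unfold A, B; lra.
  - right; unfold A, B; field; lra.
Qed.

Lemma normHs_sub_sub_le (x1 x2 y1 y2 : hseq) :
  inHs lam s x1 -> inHs lam s x2 -> inHs lam s y1 -> inHs lam s y2 ->
  normHs lam s (seq_sub (seq_sub x1 y1) (seq_sub x2 y2))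
    <= normHs lam s (seq_sub x1 x2) + normHs lam s (seq_sub y1 y2).
Proof.
  intros Hx1 Hx2 Hy1 Hy2.
  replace (seq_sub (seq_sub x1 y1) (seq_sub x2 y2)) with (seq_sub (seq_sub x1 x2) (seq_sub y1 y2))
    by (apply functional_extensionality; intros n; unfold seq_sub; ring).
  apply normHs_sub_le; apply inHs_sub; assumption.
Qed.

Lemma normHs_le_sub (x y : hseq) : inHs lam s x -> inHs lam s y ->
  normHs lam s x <= normHs lam s y + normHs lam s (seq_sub x y).
Proof.
  intros Hx Hy.
  replace x with (seq_sub y (seq_sub y x)) at 1
    by (apply functional_extensionality; intros n; unfold seq_sub; ring).
  rewrite (normHs_sub_comm x y); apply normHs_sub_le; [|apply inHs_sub]; assumption.
Qed.

End HilbertScale.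

Section Tails.

Variables (lam : hseq) (s : R).

Lemma inHs_shift (x : hseq) M : inHs lam s x -> inHs (shift M lam) s (shift M x).
Proof. intros Hx; apply (ex_series_incr_n (fun n => Rpower (lam n) s * x n ^ 2)); exact Hx. Qed.

Lemma normHs_sq_split (x : hseq) M : inHs lam s x ->
  normHs lam s x ^ 2 = sum_f_R0 (fun n => Rpower (lam n) s * x n ^ 2) M
                       + normHs (shift (S M) lam) s (shift (S M) x) ^ 2.
Proof.
  intros Hx; rewrite !normHs_sq by (try apply inHs_shift; exact Hx).
  apply (Series_incr_n (fun n => Rpower (lam n) s * x n ^ 2) (S M)); [lia | exact Hx].
Qed.

Lemma sum_le_normHs_sq (x : hseq) M : inHs lam s x ->
  sum_f_R0 (fun n => Rpower (lam n) s * x n ^ 2) M <= normHs lam s x ^ 2.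
Proof.
  intros Hx; rewrite (normHs_sq_split x M Hx).
  pose proof (pow2_ge_0 (normHs (shift (S M) lam) s (shift (S M) x))); lra.
Qed.

Lemma Hs_coord_le (x : hseq) n : inHs lam s x -> Rpower (lam n) s * x n ^ 2 <= normHs lam s x ^ 2.
Proof.
  intros Hx; eapply Rle_trans; [|apply (sum_le_normHs_sq x n Hx)].
  destruct n as [|n]; [simpl; lra|]; rewrite tech5.
  pose proof (cond_pos_sum _ n (Hs_term_nonneg lam s x)); lra.
Qed.

Lemma normHs_shift_le (x : hseq) M : inHs lam s x ->
  normHs (shift M lam) s (shift M x) <= normHs lam s x.
Proof.
  intros Hx; destruct M as [|M]; [right; reflexivity|].
  apply sq_le_of_sq_le; [apply normHs_nonneg|].
  rewrite (normHs_sq_split x M Hx); pose proof (cond_pos_sum _ M (Hs_term_nonneg lam s x)); lra.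
Qed.

Lemma normHs_shift_vanish (x : hseq) : inHs lam s x ->
  forall e, 0 < e -> exists M0, forall M, (M0 <= M)%nat -> normHs (shift M lam) s (shift M x) < e.
Proof.
  intros Hx e He.
  assert (Hlim : is_lim_seq (sum_n (fun n => Rpower (lam n) s * x n ^ 2))
                   (Series (fun n => Rpower (lam n) s * x n ^ 2))) by exact (Series_correct _ Hx).
  apply is_lim_seq_spec in Hlim.
  destruct (Hlim (mkposreal (e ^ 2) (pow_lt e 2 He))) as [M0 HM0]; exists (S M0).
  intros [|M] HM; [lia|]; specialize (HM0 M ltac:(lia)); cbn [pos] in HM0.
  rewrite sum_n_Reals in HM0; apply Rabs_lt_between in HM0.
  pose proof (normHs_sq_split x M Hx) as Hsplit; rewrite normHs_sq in Hsplit by exact Hx.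
  pose proof (normHs_nonneg (shift (S M) lam) s (shift (S M) x)); nra.
Qed.

Lemma normHs_sq_le_of_sums (x : hseq) B : inHs lam s x ->
  (exists M0, forall M, (M0 <= M)%nat -> sum_f_R0 (fun n => Rpower (lam n) s * x n ^ 2) M <= B) ->
  normHs lam s x ^ 2 <= B.
Proof.
  intros Hx [M0 HM0]; apply Rle_plus_epsilon; intros e He.
  destruct (normHs_shift_vanish x Hx (sqrt e) (sqrt_lt_R0 e He)) as [M1 HM1].
  rewrite (normHs_sq_split x (M0 + M1) Hx).
  specialize (HM0 (M0 + M1)%nat ltac:(lia)); specialize (HM1 (S (M0 + M1)) ltac:(lia)).
  pose proof (normHs_nonneg (shift (S (M0 + M1)) lam) s (shift (S (M0 + M1)) x)).
  pose proof (pow2_sqrt e ltac:(lra)); nra.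
Qed.

End Tails.

Lemma inH_inHs0 (lam x : hseq) : inH x <-> inHs lam 0 x.
Proof.
  unfold inH, inHs; split; intros H; refine (ex_series_ext _ _ _ H); intros n; simpl;
    rewrite Rpower_0_r; ring.
Qed.

Lemma normH_normHs0 (lam x : hseq) : normH x = normHs lam 0 x.
Proof. unfold normH, normHs; f_equal; apply Series_ext; intros n; rewrite Rpower_0_r; ring. Qed.

Lemma inH_sub (x y : hseq) : inH x -> inH y -> inH (seq_sub x y).
Proof. rewrite !(inH_inHs0 (fun _ => 1)); apply inHs_sub. Qed.

Lemma sum_sq_le_normH (x : hseq) M : inH x -> sum_f_R0 (fun n => x n ^ 2) M <= normH x ^ 2.
Proof.
  intros Hx; rewrite (normH_normHs0 (fun _ => 1)); apply (inH_inHs0 (fun _ => 1)) in Hx.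
  eapply Rle_trans; [|apply (sum_le_normHs_sq _ _ _ M Hx)].
  right; apply sum_eq; intros n _; rewrite Rpower_0_r; ring.
Qed.

Lemma normH_sq_le_of_sums (x : hseq) B : inH x ->
  (exists M0, forall M, (M0 <= M)%nat -> sum_f_R0 (fun n => x n ^ 2) M <= B) ->
  normH x ^ 2 <= B.
Proof.
  intros Hx [M0 HM0]; rewrite (normH_normHs0 (fun _ => 1)); apply (inH_inHs0 (fun _ => 1)) in Hx.
  apply normHs_sq_le_of_sums; [exact Hx|]; exists M0; intros M HM.
  eapply Rle_trans; [|apply (HM0 M HM)]; right; apply sum_eq; intros n _; rewrite Rpower_0_r; ring.
Qed.

(** * Curves in the spaces H^s *)

Lemma continuous_of_eps_delta (h : R -> R) t :
  (forall eps, 0 < eps -> exists delta, 0 < delta /\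
     forall r, Rabs (r - t) < delta -> Rabs (h r - h t) < eps) ->
  continuous h t.
Proof.
  intros Hh; apply continuity_pt_filterlim; intros eps Heps.
  destruct (Hh eps Heps) as [delta [Hdelta Hr]]; exists delta; split; [exact Hdelta|].
  intros r [_ Hrt]; apply Hr, Hrt.
Qed.

(* Compactness of [a, b]: the supremum of the x such that the property holds
   uniformly on [a, x] cannot be smaller than b. *)
Lemma interval_uniform_of_local (P : nat -> R -> Prop) (a b : R) : a <= b ->
  (forall t, a <= t <= b -> exists M delta, 0 < delta /\
     forall r, a <= r <= b -> Rabs (r - t) < delta -> forall M', (M <= M')%nat -> P M' r) ->
  exists M0, forall r, a <= r <= b -> forall M, (M0 <= M)%nat -> P M r.
Proof.
  intros Hab Hloc.
  set (G := fun x => a <= x <= b /\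
              exists M0, forall r, a <= r <= x -> forall M, (M0 <= M)%nat -> P M r).
  assert (Ga : G a).
  { split; [lra|]; destruct (Hloc a ltac:(lra)) as [M [delta [Hdelta Hr]]].
    exists M; intros r Hr' M' HM'; apply Hr; [lra| |exact HM'].
    replace (r - a) with 0 by lra; rewrite Rabs_R0; exact Hdelta. }
  destruct (completeness G) as [c [Hub Hlub]].
  { exists b; intros x [Hx _]; lra. }
  { exists a; exact Ga. }
  assert (Hac : a <= c) by (apply Hub, Ga).
  assert (Hcb : c <= b) by (apply Hlub; intros x [Hx _]; lra).
  destruct (Hloc c ltac:(lra)) as [Mc [delta [Hdelta Hc]]].
  assert (Hx : exists x, G x /\ c - delta < x).
  { apply NNPP; intros Hn.
    assert (c <= c - delta); [|lra].
    apply Hlub; intros x Gx; apply Rnot_lt_le; intros Hlt; apply Hn; exists x; auto. }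
  destruct Hx as [x [[Hx [M0 HM0]] Hxc]].
  set (y := Rmin (c + delta / 2) b).
  assert (Gy : G y).
  { split; [split; [unfold y; apply Rmin_case; lra|apply Rmin_r]|].
    exists (Nat.max M0 Mc); intros r Hr M HM.
    destruct (Rle_dec r x) as [Hrx|Hrx].
    - apply HM0; [lra|lia].
    - assert (Hcx : x <= c) by (apply Hub; split; [lra|exists M0; exact HM0]).
      assert (r <= c + delta / 2) by (apply Rle_trans with y; [lra|apply Rmin_l]).
      apply Hc; [split; [lra|apply Rle_trans with y; [lra|apply Rmin_r]]|
                 apply Rabs_def1; lra|lia]. }
  assert (Hyc : y <= c) by (apply Hub, Gy).
  assert (Hyb : y = b) by (unfold y in *; revert Hyc; apply Rmin_case_strong; lra).
  destruct Gy as [_ [M HM]]; exists M; intros r Hr; apply HM; lra.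
Qed.

Definition Hs_continuous_at (lam : hseq) (s : R) (X : R -> hseq) (t : R) : Prop :=
  forall eps, 0 < eps -> exists delta, 0 < delta /\
    forall r, 0 < r -> Rabs (r - t) < delta -> normHs lam s (seq_sub (X r) (X t)) < eps.

Section ContinuousCurves.

Variables (lam : hseq) (s : R).

Lemma Hs_continuous_sub (X Y : R -> hseq) t :
  (forall r, 0 < r -> inHs lam s (X r)) -> (forall r, 0 < r -> inHs lam s (Y r)) -> 0 < t ->
  Hs_continuous_at lam s X t -> Hs_continuous_at lam s Y t ->
  Hs_continuous_at lam s (fun r => seq_sub (X r) (Y r)) t.
Proof.
  intros HX HY Ht HXc HYc eps Heps.
  destruct (HXc (eps / 2) ltac:(lra)) as [d1 [Hd1 HX1]].
  destruct (HYc (eps / 2) ltac:(lra)) as [d2 [Hd2 HY2]].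
  exists (Rmin d1 d2); split; [apply Rmin_case; lra|]; intros r Hr Hrt.
  eapply Rle_lt_trans; [apply normHs_sub_sub_le; auto|].
  specialize (HX1 r Hr (Rlt_le_trans _ _ _ Hrt (Rmin_l _ _))).
  specialize (HY2 r Hr (Rlt_le_trans _ _ _ Hrt (Rmin_r _ _))); lra.
Qed.

Lemma Hs_continuous_coord (X : R -> hseq) t n :
  (forall r, 0 < r -> inHs lam s (X r)) -> 0 < t -> Hs_continuous_at lam s X t ->
  continuous (fun r => X r n) t.
Proof.
  intros HX Ht HXc; apply continuous_of_eps_delta; intros eps Heps.
  set (c := Rpower (lam n) s); assert (Hc : 0 < c) by apply Rpower_pos.
  destruct (HXc (eps * sqrt c)) as [delta [Hdelta Hr]].
  { apply Rmult_lt_0_compat; [exact Heps|apply sqrt_lt_R0, Hc]. }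
  exists (Rmin delta t); split; [apply Rmin_case; lra|]; intros r Hrt.
  assert (Hr0 : 0 < r) by (pose proof (Rmin_r delta t); apply Rabs_def2 in Hrt; lra).
  specialize (Hr r Hr0 (Rlt_le_trans _ _ _ Hrt (Rmin_l _ _))).
  pose proof (Hs_coord_le lam s _ n (inHs_sub lam s _ _ (HX r Hr0) (HX t Ht))) as Hcoord.
  change (seq_sub (X r) (X t) n) with (X r n - X t n) in Hcoord; fold c in Hcoord.
  pose proof (normHs_nonneg lam s (seq_sub (X r) (X t))).
  pose proof (pow2_sqrt c (Rlt_le _ _ Hc)); pose proof (sqrt_lt_R0 c Hc).
  assert (HN : normHs lam s (seq_sub (X r) (X t)) ^ 2 < eps ^ 2 * c).
  { replace (eps ^ 2 * c) with ((eps * sqrt c) ^ 2) by (rewrite Rpow_mult_distr; congruence).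
    nra. }
  assert (Hsq : (X r n - X t n) ^ 2 < eps ^ 2) by (apply Rmult_lt_reg_l with c; nra).
  unfold Rabs; destruct Rcase_abs; nra.
Qed.

Lemma Hs_continuous_uniform_tail (X : R -> hseq) a b :
  0 < a <= b -> (forall r, 0 < r -> inHs lam s (X r)) ->
  (forall t, 0 < t -> Hs_continuous_at lam s X t) ->
  forall e, 0 < e -> exists M0, forall r, a <= r <= b -> forall M, (M0 <= M)%nat ->
    normHs (shift M lam) s (shift M (X r)) < e.
Proof.
  intros Hab HX HXc e He.
  apply (interval_uniform_of_local (fun M r => normHs (shift M lam) s (shift M (X r)) < e));
    [lra|]; intros t Ht.
  destruct (normHs_shift_vanish lam s (X t) (HX t ltac:(lra)) (e / 2) ltac:(lra)) as [M HM].
  destruct (HXc t ltac:(lra) (e / 2) ltac:(lra)) as [delta [Hdelta Hr]].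
  exists M, delta; split; [exact Hdelta|]; intros r Hr' Hrt M' HM'.
  assert (Hdiff : inHs lam s (seq_sub (X t) (X r))) by (apply inHs_sub; apply HX; lra).
  replace (shift M' (X r)) with (seq_sub (shift M' (X t)) (shift M' (seq_sub (X t) (X r))))
    by (apply functional_extensionality; intros k; unfold shift, seq_sub; ring).
  eapply Rle_lt_trans; [apply normHs_sub_le; apply inHs_shift; [apply HX; lra|exact Hdiff]|].
  pose proof (normHs_shift_le lam s _ M' Hdiff) as Htail.
  rewrite normHs_sub_comm in Htail; specialize (HM M' HM'); specialize (Hr r ltac:(lra) Hrt); lra.
Qed.

End ContinuousCurves.

Lemma Hs_continuous_lipschitz (lam : hseq) (s s' L : R) (f : hseq -> hseq) (X : R -> hseq) t :
  (forall w1 w2, inHs lam s w1 -> inHs lam s w2 ->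
     normHs lam s' (seq_sub (f w1) (f w2)) <= L * normHs lam s (seq_sub w1 w2)) ->
  (forall r, 0 < r -> inHs lam s (X r)) -> 0 < t ->
  Hs_continuous_at lam s X t -> Hs_continuous_at lam s' (fun r => f (X r)) t.
Proof.
  intros Hlip HX Ht HXc eps Heps.
  assert (HL : 0 < Rabs L + 1) by (pose proof (Rabs_pos L); lra).
  destruct (HXc (eps / (Rabs L + 1))) as [delta [Hdelta Hr]]; [apply Rdiv_lt_0_compat; lra|].
  exists delta; split; [exact Hdelta|]; intros r Hr0 Hrt.
  eapply Rle_lt_trans; [apply Hlip; auto|].
  specialize (Hr r Hr0 Hrt); set (d := normHs lam s (seq_sub (X r) (X t))) in *.
  assert (Hd : 0 <= d) by apply normHs_nonneg.
  assert (Hdeps : (Rabs L + 1) * d < eps).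
  { apply Rmult_lt_compat_l with (r := Rabs L + 1) in Hr; [|exact HL].
    replace ((Rabs L + 1) * (eps / (Rabs L + 1))) with eps in Hr by (field; lra); exact Hr. }
  pose proof (Rle_abs L); nra.
Qed.

Lemma normH_sub_upper_semicontinuous_0 (X Y : R -> hseq) :
  (forall r, 0 <= r -> inH (X r)) -> (forall r, 0 <= r -> inH (Y r)) ->
  (forall eps, 0 < eps -> exists delta, 0 < delta /\
     forall r, 0 <= r -> Rabs (r - 0) < delta -> normH (seq_sub (X r) (X 0)) < eps) ->
  (forall eps, 0 < eps -> exists delta, 0 < delta /\
     forall r, 0 <= r -> Rabs (r - 0) < delta -> normH (seq_sub (Y r) (Y 0)) < eps) ->
  forall e, 0 < e -> exists delta, 0 < delta /\ forall a, 0 < a < delta ->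
    normH (seq_sub (X a) (Y a)) <= normH (seq_sub (X 0) (Y 0)) + e.
Proof.
  intros HX HY HXc HYc e He.
  destruct (HXc (e / 2) ltac:(lra)) as [d1 [Hd1 HX0]].
  destruct (HYc (e / 2) ltac:(lra)) as [d2 [Hd2 HY0]].
  exists (Rmin d1 d2); split; [apply Rmin_case; lra|]; intros a [Ha Had].
  assert (Hra : Rabs (a - 0) < Rmin d1 d2) by (rewrite Rminus_0_r, Rabs_pos_eq; lra).
  specialize (HX0 a ltac:(lra) (Rlt_le_trans _ _ _ Hra (Rmin_l _ _))).
  specialize (HY0 a ltac:(lra) (Rlt_le_trans _ _ _ Hra (Rmin_r _ _))).
  assert (Hin : forall r, 0 <= r -> inHs (fun _ => 1) 0 (X r) /\ inHs (fun _ => 1) 0 (Y r))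
    by (intros r Hr; rewrite <- !inH_inHs0; auto).
  destruct (Hin a ltac:(lra)) as [HXa HYa]; destruct (Hin 0 (Rle_refl 0)) as [HX0' HY0'].
  rewrite !(normH_normHs0 (fun _ => 1)) in *.
  eapply Rle_trans;
    [apply (normHs_le_sub _ _ _ (seq_sub (X 0) (Y 0))); apply inHs_sub; assumption|].
  pose proof (normHs_sub_sub_le _ _ _ _ _ _ HXa HX0' HYa HY0'); lra.
Qed.

(** * Differential inequalities and solutions *)

Lemma exp_le_exp_of_le x y : x <= y -> exp x <= exp y.
Proof. intros Hxy; destruct (Req_dec x y) as [->|Hne]; [lra|left; apply exp_increasing; lra]. Qed.

Lemma is_derive_sum_sq (X : R -> hseq) (X' : hseq) s M :
  (forall n, is_derive (fun r => X r n) s (X' n)) ->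
  is_derive (fun r => sum_f_R0 (fun n => X r n ^ 2) M) s (sum_f_R0 (fun n => 2 * X s n * X' n) M).
Proof.
  intros HX.
  assert (Hsq : forall n, is_derive (fun r => X r n ^ 2) s (2 * X s n * X' n)).
  { intros n; replace (2 * X s n * X' n) with (INR 2 * X' n * X s n ^ Nat.pred 2) by (simpl; ring).
    apply is_derive_pow, HX. }
  induction M as [|M IH]; [apply Hsq|].
  apply (is_derive_plus (fun r => sum_f_R0 (fun n => X r n ^ 2) M) (fun r => X r (S M) ^ 2));
    [exact IH | apply Hsq].
Qed.

(* Integrating factor: exp (k s) * (E s - c / k) is nonincreasing on [a, b]. *)
Lemma exp_decay_of_deriv_le (E dE : R -> R) (k c a b : R) :
  0 < k -> 0 <= c -> a <= b ->
  (forall s, a <= s <= b -> is_derive E s (dE s)) ->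
  (forall s, a <= s <= b -> dE s <= - k * E s + c) ->
  E b <= exp (- k * (b - a)) * E a + c / k.
Proof.
  intros Hk Hc Hab HE HdE.
  set (Psi := fun s => exp (k * s) * (E s - c / k)).
  assert (HPsi : forall s, a <= s <= b ->
            is_derive Psi s (exp (k * s) * (k * (E s - c / k) + dE s))).
  { intros s Hs.
    assert (Hexp : is_derive (fun r => exp (k * r)) s (k * exp (k * s)))
      by (auto_derive; [exact I|ring]).
    assert (HEc : is_derive (fun r => E r - c / k) s (dE s)).
    { replace (dE s) with (dE s - 0) by ring.
      apply (is_derive_minus E (fun _ => c / k));
        [apply HE, Hs|apply (is_derive_const (V := R_NormedModule))]. }
    replace (exp (k * s) * (k * (E s - c / k) + dE s))
      with (k * exp (k * s) * (E s - c / k) + exp (k * s) * dE s) by ring.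
    apply (is_derive_mult (fun r => exp (k * r)) (fun r => E r - c / k)); auto.
    intros; apply Rmult_comm. }
  assert (Hmono : Psi b <= Psi a).
  { destruct (Req_dec a b) as [->|Hne]; [lra|].
    destruct (MVT_gen Psi a b (fun s => exp (k * s) * (k * (E s - c / k) + dE s)))
      as [xi [Hxi Heq]]; rewrite Rmin_left, Rmax_right in * by lra.
    - intros x Hx; apply HPsi; lra.
    - intros x Hx; apply continuity_pt_filterlim, (@ex_derive_continuous R_AbsRing R_NormedModule).
      eexists; apply HPsi, Hx.
    - specialize (HdE xi Hxi); pose proof (exp_pos (k * xi)).
      assert (exp (k * xi) * (k * (E xi - c / k) + dE xi) <= 0).
      { apply Rmult_le_0_l; [lra|].
        replace (k * (E xi - c / k)) with (k * E xi - c) by (field; lra); lra. }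
      nra. }
  unfold Psi in Hmono.
  assert (Hsplit : exp (k * a) = exp (- k * (b - a)) * exp (k * b))
    by (rewrite <- exp_plus; f_equal; ring).
  assert (Hle1 : exp (- k * (b - a)) <= 1)
    by (rewrite <- exp_0; apply exp_le_exp_of_le; nra).
  pose proof (exp_pos (k * b)); pose proof (exp_pos (- k * (b - a))).
  assert (Hck : 0 <= c / k) by (apply Rdiv_le_0_compat; lra).
  rewrite Hsplit in Hmono.
  assert (E b - c / k <= exp (- k * (b - a)) * (E a - c / k)) by nra.
  nra.
Qed.

Lemma le_of_forall_pos_continuous (x : R) (h : R -> R) :
  continuous h 0 -> (forall e, 0 < e -> x <= h e) -> x <= h 0.
Proof.
  intros Hh Hle; apply Rnot_lt_le; intros Hlt.
  apply continuity_pt_filterlim in Hh.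
  destruct (Hh (x - h 0) ltac:(lra)) as [delta [Hdelta Hclose]].
  assert (Hd : R_dist (delta / 2) 0 < delta)
    by (unfold R_dist; rewrite Rminus_0_r, Rabs_pos_eq; lra).
  assert (Hne : 0 <> delta / 2) by (apply Rlt_not_eq; lra).
  specialize (Hclose (delta / 2) (conj (conj I Hne) Hd)).
  unfold R_dist in Hclose; apply Rabs_def2 in Hclose.
  specialize (Hle (delta / 2) ltac:(lra)); lra.
Qed.

Lemma exp_decay_from_right (phi : R -> R) (beta t : R) :
  0 <= beta -> 0 <= phi 0 -> 0 < t ->
  (forall a, 0 < a <= t -> phi t <= exp (- beta * (t - a)) * phi a) ->
  (forall e, 0 < e -> exists delta, 0 < delta /\ forall a, 0 < a < delta -> phi a <= phi 0 + e) ->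
  phi t <= phi 0 * exp (- beta * t).
Proof.
  intros Hbeta Hphi0 Ht Hdecay Husc.
  replace (phi 0 * exp (- beta * t)) with (exp (- beta * (t - 0)) * (phi 0 + 0))
    by (rewrite Rminus_0_r; ring).
  apply (le_of_forall_pos_continuous _ (fun e => exp (- beta * (t - e)) * (phi 0 + e))).
  { apply (@ex_derive_continuous R_AbsRing R_NormedModule); auto_derive; exact I. }
  intros e He; destruct (Husc e He) as [delta [Hdelta Hphi]].
  set (a := Rmin (Rmin e (delta / 2)) t).
  assert (Ha : 0 < a) by (unfold a; repeat apply Rmin_case; lra).
  assert (Hae : a <= e) by (unfold a; eapply Rle_trans; apply Rmin_l).
  assert (Had : a < delta) by (unfold a; eapply Rle_lt_trans; [apply Rmin_l|];
                               eapply Rle_lt_trans; [apply Rmin_r|lra]).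
  assert (Hat : a <= t) by apply Rmin_r.
  eapply Rle_trans; [apply (Hdecay a); split; assumption|].
  pose proof (exp_pos (- beta * (t - a))); specialize (Hphi a (conj Ha Had)).
  assert (exp (- beta * (t - a)) <= exp (- beta * (t - e))) by (apply exp_le_exp_of_le; nra).
  nra.
Qed.

Lemma is_derive_of_integral (x G : R -> R) t : 0 < t ->
  (forall r, 0 <= r -> ex_RInt G 0 r /\ x r - x 0 = RInt G 0 r) ->
  continuous G t -> is_derive x t (G t).
Proof.
  intros Ht Hint HG.
  assert (Hnear : locally t (fun r => 0 < r)).
  { exists (mkposreal t Ht); intros r Hr; change (Rabs (r - t) < t) in Hr.
    apply Rabs_def2 in Hr; lra. }
  apply (is_derive_ext_loc (fun r => x 0 + RInt G 0 r)).
  { revert Hnear; apply filter_imp; intros r Hr; destruct (Hint r ltac:(lra)); lra. }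
  replace (G t) with (0 + G t) by ring.
  apply (is_derive_plus (fun _ => x 0) (fun r => RInt G 0 r));
    [apply (is_derive_const (V := R_NormedModule))|].
  apply (is_derive_RInt G (fun r => RInt G 0 r) 0 t); [|exact HG].
  revert Hnear; apply filter_imp; intros r Hr.
  apply (RInt_correct (V := R_CompleteNormedModule)), Hint; lra.
Qed.

Lemma is_solution_forcing_ext (lam : hseq) (alpha : R) (f : hseq -> hseq) (g : hseq)
    (h h' : R -> hseq) (v : R -> hseq) :
  (forall s n, 0 <= s -> h s n = h' s n) ->
  is_solution lam alpha f g h v -> is_solution lam alpha f g h' v.
Proof.
  intros Hh [HvH [HvHc [HvA [HvAc [HvL2 Hint]]]]].
  do 5 (split; [assumption|]); intros n t Ht.
  assert (Heq : forall s, Rmin 0 t < s < Rmax 0 t ->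
            - lam n * v s n + f (v s) n + g n - h s n
            = - lam n * v s n + f (v s) n + g n - h' s n).
  { intros s Hs; rewrite Rmin_left, Rmax_right in Hs by lra; rewrite Hh by lra; reflexivity. }
  destruct (Hint n t Ht) as [Hex HRInt]; split.
  - exact (ex_RInt_ext _ _ 0 t Heq Hex).
  - rewrite HRInt; exact (RInt_ext _ _ 0 t Heq).
Qed.

Lemma is_solution_coord_derive (lam : hseq) (alpha L : R) (f : hseq -> hseq) (g : hseq)
    (h : R -> hseq) (v : R -> hseq) n s :
  (forall w, inHs lam alpha w -> inHs lam (- alpha) (f w)) ->
  (forall w1 w2, inHs lam alpha w1 -> inHs lam alpha w2 ->
     normHs lam (- alpha) (seq_sub (f w1) (f w2)) <= L * normHs lam alpha (seq_sub w1 w2)) ->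
  is_solution lam alpha f g h v -> 0 < s -> continuous (fun r => h r n) s ->
  is_derive (fun r => v r n) s (- lam n * v s n + f (v s) n + g n - h s n).
Proof.
  intros Hf Hlip [_ [_ [HvA [HvAc [_ Hint]]]]] Hs Hh.
  apply (is_derive_of_integral (fun r => v r n)
           (fun r => - lam n * v r n + f (v r) n + g n - h r n));
    [exact Hs|intros r Hr; apply Hint, Hr|].
  assert (Hv : continuous (fun r => v r n) s)
    by exact (Hs_continuous_coord lam alpha v s n HvA Hs (HvAc s Hs)).
  assert (Hfv : continuous (fun r => f (v r) n) s).
  { apply (Hs_continuous_coord lam (- alpha) (fun r => f (v r))); [intros r Hr; auto|exact Hs|].
    exact (Hs_continuous_lipschitz lam alpha (- alpha) L f v s Hlip HvA Hs (HvAc s Hs)). }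
  apply (continuous_minus (fun r => - lam n * v r n + f (v r) n + g n)); [|exact Hh].
  apply (continuous_plus (fun r => - lam n * v r n + f (v r) n)); [|apply continuous_const].
  apply (continuous_plus (fun r => - lam n * v r n)); [|exact Hfv].
  apply (continuous_mult (fun _ => - lam n)); [apply continuous_const|exact Hv].
Qed.

(** * The energy estimate *)

Lemma energy_term_le (w d mu om Lp beta : R) :
  0 < Lp -> 0 < om -> beta <= mu - Lp * om ->
  2 * w * (- mu * w + d) <= - (2 * beta) * w ^ 2 - Lp * (om * w ^ 2) + / Lp * (/ om * d ^ 2).
Proof.
  intros HLp Hom Hgap.
  assert (Hyoung : 2 * w * d <= Lp * om * w ^ 2 + / Lp * / om * d ^ 2).
  { assert (Hp : 0 < Lp * om) by (apply Rmult_lt_0_compat; assumption).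
    apply Rmult_le_reg_l with (Lp * om); [exact Hp|].
    replace (Lp * om * (Lp * om * w ^ 2 + / Lp * / om * d ^ 2))
      with ((Lp * om * w) ^ 2 + d ^ 2) by (field; lra).
    pose proof (pow2_ge_0 (Lp * om * w - d)); nra. }
  pose proof (pow2_ge_0 w); nra.
Qed.

Section EnergyDecay.

Variables (lam mu : hseq) (alpha Lp beta : R) (W D : R -> hseq).

Hypothesis Lp_pos : 0 < Lp.
Hypothesis beta_pos : 0 < beta.
Hypothesis spectral_gap : forall n, beta <= mu n - Lp * Rpower (lam n) alpha.
Hypothesis W_in_H : forall s, 0 < s -> inH (W s).
Hypothesis W_in_Halpha : forall s, 0 < s -> inHs lam alpha (W s).
Hypothesis W_continuous : forall s, 0 < s -> Hs_continuous_at lam alpha W s.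
Hypothesis D_in_Hneg : forall s, 0 < s -> inHs lam (- alpha) (D s).
Hypothesis D_le : forall s, 0 < s ->
  normHs lam (- alpha) (D s) <= Lp * normHs lam alpha (W s).
Hypothesis W_deriv : forall n s, 0 < s ->
  is_derive (fun r => W r n) s (- mu n * W s n + D s n).

Lemma truncated_energy_deriv_le s M : 0 < s ->
  sum_f_R0 (fun n => 2 * W s n * (- mu n * W s n + D s n)) M
    <= - (2 * beta) * sum_f_R0 (fun n => W s n ^ 2) M
       + Lp * normHs (shift (S M) lam) alpha (shift (S M) (W s)) ^ 2.
Proof.
  intros Hs; set (om := fun n => Rpower (lam n) alpha).
  set (tail := normHs (shift (S M) lam) alpha (shift (S M) (W s))).
  eapply Rle_trans.
  { apply sum_Rle; intros n _; apply (energy_term_le _ _ _ (om n) Lp beta Lp_pos);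
      [apply Rpower_pos|apply spectral_gap]. }
  assert (Hlin : forall (c1 c2 c3 : R) (a1 a2 a3 : nat -> R),
            sum_f_R0 (fun n => c1 * a1 n - c2 * a2 n + c3 * a3 n) M
            = c1 * sum_f_R0 a1 M - c2 * sum_f_R0 a2 M + c3 * sum_f_R0 a3 M).
  { intros; induction M as [|M IH]; simpl; [|rewrite IH]; ring. }
  rewrite Hlin.
  assert (HD : sum_f_R0 (fun n => / om n * D s n ^ 2) M
               <= Lp ^ 2 * (sum_f_R0 (fun n => om n * W s n ^ 2) M + tail ^ 2)).
  { eapply Rle_trans; [|apply (Rle_trans _ ((Lp * normHs lam alpha (W s)) ^ 2))].
    - replace (sum_f_R0 (fun n => / om n * D s n ^ 2) M)
        with (sum_f_R0 (fun n => Rpower (lam n) (- alpha) * D s n ^ 2) M)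
        by (apply sum_eq; intros n _; unfold om; rewrite Rpower_Ropp; reflexivity).
      apply sum_le_normHs_sq, D_in_Hneg, Hs.
    - apply pow_incr; split; [apply normHs_nonneg|apply D_le, Hs].
    - right; rewrite Rpow_mult_distr, (normHs_sq_split lam alpha (W s) M (W_in_Halpha s Hs)).
      reflexivity. }
  assert (Hinv : / Lp * sum_f_R0 (fun n => / om n * D s n ^ 2) M
                 <= Lp * (sum_f_R0 (fun n => om n * W s n ^ 2) M + tail ^ 2)).
  { replace (Lp * (sum_f_R0 (fun n => om n * W s n ^ 2) M + tail ^ 2))
      with (/ Lp * (Lp ^ 2 * (sum_f_R0 (fun n => om n * W s n ^ 2) M + tail ^ 2)))
      by (field; lra).
    apply Rmult_le_compat_l; [left; apply Rinv_0_lt_compat, Lp_pos|exact HD]. }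
  lra.
Qed.

Lemma energy_decay_pos a b : 0 < a <= b ->
  normH (W b) <= exp (- beta * (b - a)) * normH (W a).
Proof.
  intros Hab.
  assert (Hexp2 : exp (- beta * (b - a)) ^ 2 = exp (- (2 * beta) * (b - a)))
    by (simpl; rewrite Rmult_1_r, <- exp_plus; f_equal; ring).
  apply sq_le_of_sq_le; [apply Rmult_le_pos; [left; apply exp_pos|apply sqrt_pos]|].
  rewrite Rpow_mult_distr, Hexp2.
  apply Rle_plus_epsilon; intros e He.
  set (eps := sqrt (2 * beta * e / Lp)).
  assert (Heps : 0 < eps) by (apply sqrt_lt_R0, Rdiv_lt_0_compat; nra).
  assert (Heps2 : Lp * eps ^ 2 / (2 * beta) = e)
    by (unfold eps; rewrite pow2_sqrt by (apply Rdiv_le_0_compat; nra); field; lra).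
  destruct (Hs_continuous_uniform_tail lam alpha W a b Hab W_in_Halpha W_continuous eps Heps)
    as [M0 Htail].
  apply normH_sq_le_of_sums; [apply W_in_H; lra|]; exists M0; intros M HM.
  eapply Rle_trans.
  - apply (exp_decay_of_deriv_le (fun s => sum_f_R0 (fun n => W s n ^ 2) M)
             (fun s => sum_f_R0 (fun n => 2 * W s n * (- mu n * W s n + D s n)) M)
             (2 * beta) (Lp * eps ^ 2) a b); try nra.
    + intros s Hs; apply is_derive_sum_sq; intros n; apply W_deriv; lra.
    + intros s Hs; eapply Rle_trans; [apply truncated_energy_deriv_le; lra|].
      apply Rplus_le_compat_l, Rmult_le_compat_l; [lra|].
      apply pow_incr; split; [apply normHs_nonneg|left; apply Htail; [lra|lia]].
  - rewrite Heps2; apply Rplus_le_compat_r, Rmult_le_compat_l; [left; apply exp_pos|].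
    apply sum_sq_le_normH, W_in_H; lra.
Qed.

End EnergyDecay.

(** * The nudged equation *)

Section Nudging.

Variables (lam : hseq) (alpha L : R) (f : hseq -> hseq) (g : hseq) (N : nat) (K : R).

Hypothesis f_maps : forall w, inHs lam alpha w -> inHs lam (- alpha) (f w).
Hypothesis f_lipschitz : forall w1 w2, inHs lam alpha w1 -> inHs lam alpha w2 ->
  normHs lam (- alpha) (seq_sub (f w1) (f w2)) <= L * normHs lam alpha (seq_sub w1 w2).

Variables (v U : R -> hseq).

Hypothesis v_solution :
  is_solution lam alpha f g (fun s n => K * PN N (seq_sub (v s) (U s)) n) v.
Hypothesis U_solution : is_solution lam alpha f g (fun _ _ => 0) U.

Lemma nudged_difference_deriv n s : 0 < s ->
  is_derive (fun r => v r n - U r n) s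
    (- (lam n + (if Nat.ltb n N then K else 0)) * (v s n - U s n)
     + (f (v s) n - f (U s) n)).
Proof.
  intros Hs.
  destruct v_solution as [_ [_ [HvA [HvAc _]]]]; destruct U_solution as [_ [_ [HUA [HUAc _]]]].
  assert (Hv : continuous (fun r => v r n) s)
    by exact (Hs_continuous_coord lam alpha v s n HvA Hs (HvAc s Hs)).
  assert (HU : continuous (fun r => U r n) s)
    by exact (Hs_continuous_coord lam alpha U s n HUA Hs (HUAc s Hs)).
  assert (Hforcing : continuous (fun r => K * PN N (seq_sub (v r) (U r)) n) s).
  { unfold PN, seq_sub; destruct (Nat.ltb n N);
      apply (continuous_mult (fun _ => K)); try apply continuous_const.
    apply (continuous_minus (fun r => v r n)); assumption. }
  pose proof (is_solution_coord_derive lam alpha L f g _ v n s f_maps f_lipschitz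
                v_solution Hs Hforcing) as Hdv.
  pose proof (is_solution_coord_derive lam alpha L f g _ U n s f_maps f_lipschitz
                U_solution Hs (continuous_const 0 s)) as HdU.
  replace (- (lam n + (if Nat.ltb n N then K else 0)) * (v s n - U s n) + (f (v s) n - f (U s) n))
    with ((- lam n * v s n + f (v s) n + g n - K * PN N (seq_sub (v s) (U s)) n)
          - (- lam n * U s n + f (U s) n + g n - 0))
    by (unfold PN, seq_sub; destruct (Nat.ltb n N); ring).
  apply (is_derive_minus (fun r => v r n) (fun r => U r n)); assumption.
Qed.

Variables (Lp beta : R).

Hypothesis L_le_Lp : L <= Lp.
Hypothesis Lp_pos : 0 < Lp.
Hypothesis beta_pos : 0 < beta.
Hypothesis spectral_gap : forall n,
  beta <= lam n + (if Nat.ltb n N then K else 0) - Lp * Rpower (lam n) alpha.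

Lemma nudged_contraction t : 0 <= t ->
  normH (seq_sub (v t) (U t)) <= normH (seq_sub (v 0) (U 0)) * exp (- beta * t).
Proof.
  intros Ht.
  pose proof v_solution as [HvH [HvHc [HvA [HvAc _]]]].
  pose proof U_solution as [HUH [HUHc [HUA [HUAc _]]]].
  set (W := fun s => seq_sub (v s) (U s)).
  assert (Hdecay : forall a, 0 < a <= t -> normH (W t) <= exp (- beta * (t - a)) * normH (W a)).
  { intros a Ha.
    apply (energy_decay_pos lam (fun n => lam n + (if Nat.ltb n N then K else 0)) alpha Lp beta
             W (fun s => seq_sub (f (v s)) (f (U s)))); try assumption.
    - intros s Hs; apply inH_sub; [apply HvH|apply HUH]; lra.
    - intros s Hs; apply inHs_sub; auto.
    - intros s Hs; apply Hs_continuous_sub;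
        [exact HvA|exact HUA|exact Hs|exact (HvAc s Hs)|exact (HUAc s Hs)].
    - intros s Hs; apply inHs_sub; auto.
    - intros s Hs; eapply Rle_trans; [apply f_lipschitz; auto|].
      apply Rmult_le_compat_r; [apply normHs_nonneg|exact L_le_Lp].
    - intros n s Hs; apply nudged_difference_deriv, Hs. }
  destruct (Req_dec t 0) as [->|Ht0]; [rewrite Rmult_0_r, exp_0, Rmult_1_r; lra|].
  apply (exp_decay_from_right (fun a => normH (W a)) beta t);
    [lra|apply sqrt_pos|lra|exact Hdecay|].
  exact (normH_sub_upper_semicontinuous_0 v U HvH HUH (HvHc 0 (Rle_refl 0)) (HUHc 0 (Rle_refl 0))).
Qed.

End Nudging.

Lemma spectrum_pos (lam : hseq) : spectrum_ok lam -> forall n, 0 < lam n.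
Proof. intros [H0 [Hmono _]] n; induction n as [|n IH]; [exact H0|specialize (Hmono n); lra]. Qed.

Lemma spectrum_mono (lam : hseq) : spectrum_ok lam -> forall n m, (n <= m)%nat -> lam n <= lam m.
Proof.
  intros [_ [Hmono _]] n m Hnm; induction Hnm as [|m _ IH]; [lra|specialize (Hmono m); lra].
Qed.

(* With p = lam_N^alpha and q = lam_N^(1-alpha) > Lp, high modes are damped by
   lam_n - Lp lam_n^alpha >= p (q - Lp) and low modes by K - Lp p > p q - Lp p. *)
Lemma nudging_spectral_gap (lam : hseq) (alpha L : R) (N : nat) :
  spectrum_ok lam -> 0 <= alpha < 1 -> L < Rpower (lam N) (1 - alpha) ->
  exists Lp beta, 0 < Lp /\ L <= Lp /\ 0 < beta /\
    forall K, lam N < K -> forall n,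
      beta <= lam n + (if Nat.ltb n N then K else 0) - Lp * Rpower (lam n) alpha.
Proof.
  intros Hspec Halpha HL.
  set (p := Rpower (lam N) alpha); set (q := Rpower (lam N) (1 - alpha)).
  assert (Hp : 0 < p) by apply Rpower_pos; assert (Hq : 0 < q) by apply Rpower_pos.
  assert (Hsplit : forall n, lam n = Rpower (lam n) alpha * Rpower (lam n) (1 - alpha)).
  { intros n; rewrite <- Rpower_plus; replace (alpha + (1 - alpha)) with 1 by ring.
    rewrite Rpower_1; [reflexivity|apply spectrum_pos, Hspec]. }
  set (Lp := Rmax L (q / 2)).
  assert (HLp : Lp < q) by (apply Rmax_lub_lt; [exact HL|lra]).
  assert (HLp0 : 0 < Lp) by (apply Rlt_le_trans with (q / 2); [lra|apply Rmax_r]).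
  exists Lp, (p * (q - Lp)); split; [exact HLp0|].
  split; [apply Rmax_l|]; split; [apply Rmult_lt_0_compat; lra|].
  intros K HK n; rewrite (Hsplit N) in HK; fold p q in HK.
  assert (Hpos := spectrum_pos lam Hspec n).
  destruct (Nat.ltb n N) eqn:Hn.
  - apply Nat.ltb_lt in Hn.
    assert (Hpn : Rpower (lam n) alpha <= p)
      by (apply Rle_Rpower_l; [lra|split; [exact Hpos|apply spectrum_mono; auto; lia]]).
    assert (Lp * Rpower (lam n) alpha <= Lp * p) by (apply Rmult_le_compat_l; lra); lra.
  - apply Nat.ltb_ge in Hn.
    assert (Hpn : p <= Rpower (lam n) alpha)
      by (apply Rle_Rpower_l; [lra|split; [apply spectrum_pos, Hspec|apply spectrum_mono; auto]]).
    assert (Hqn : q <= Rpower (lam n) (1 - alpha))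
      by (apply Rle_Rpower_l; [lra|split; [apply spectrum_pos, Hspec|apply spectrum_mono; auto]]).
    rewrite (Hsplit n) at 1; nra.
Qed.

Lemma attractor_feedback_eq (S : R -> hseq -> hseq) (Att : hseq -> Prop) (F : hseq -> R)
    (ThetaN : hseq -> hseq) (N k : nat) (tau : R) (u : R -> hseq) :
  0 < tau ->
  (forall w, Att w -> ThetaN (fun j => F (S (INR j * tau) w)) = PN N (S (INR k * tau) w)) ->
  (forall s, Att (u s)) -> (forall s t, 0 <= t -> S t (u s) = u (t + s)) ->
  forall s, ThetaN (fun j => F (u (s - INR k * tau + INR j * tau))) = PN N (u s).
Proof.
  intros Htau HTh Hu Hut s.
  assert (Hshift : forall j,
            S (INR j * tau) (u (s - INR k * tau)) = u (s - INR k * tau + INR j * tau)).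
  { intros j; rewrite Hut by (apply Rmult_le_pos; [apply pos_INR|lra]); f_equal; ring. }
  replace (fun j => F (u (s - INR k * tau + INR j * tau)))
    with (fun j => F (S (INR j * tau) (u (s - INR k * tau))))
    by (apply functional_extensionality; intros j; rewrite Hshift; reflexivity).
  rewrite HTh, Hshift by apply Hu; f_equal; f_equal; ring.
Qed.

Theorem proposition4p7
  (lam : hseq) (alpha C L : R) (f : hseq -> hseq) (g : hseq)
  (S : R -> hseq -> hseq) (Att : hseq -> Prop) (N : nat)
  (F : hseq -> R) (tau : R) (k : nat) (ThetaN : hseq -> hseq) :
  spectrum_ok lam ->
  0 <= alpha < 1 ->
  (forall w, inHs lam alpha w ->
     inHs lam (- alpha) (f w) /\ normHs lam (- alpha) (f w) <= C) ->
  (forall w1 w2, inHs lam alpha w1 -> inHs lam alpha w2 ->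
     normHs lam (- alpha) (seq_sub (f w1) (f w2))
       <= L * normHs lam alpha (seq_sub w1 w2)) ->
  inHs lam (- alpha) g ->
  (exists l : list hseq, forall e, is_equilibrium lam alpha f g e -> In e l) ->
  (* S is the solution semigroup on H *)
  (forall u0, inH u0 ->
     S 0 u0 = u0 /\ is_solution lam alpha f g (fun _ _ => 0) (fun t => S t u0)) ->
  is_global_attractor S Att ->
  L < Rpower (lam N) (1 - alpha) ->
  (* F continuous on H *)
  (forall x, inH x -> forall eps, 0 < eps -> exists delta, 0 < delta /\
     forall y, inH y -> normH (seq_sub y x) < delta -> Rabs (F y - F x) < eps) ->
  0 < tau ->
  (* F(k,.) injective on the attractor *)
  (forall u1 u2, Att u1 -> Att u2 ->
     (forall j, (j < k)%nat -> F (S (INR j * tau) u1) = F (S (INR j * tau) u2)) ->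
     u1 = u2) ->
  (* Theta_N : R^k -> P_N H, continuous, extends xi |-> P_N Theta(xi) *)
  (forall xi n, (N <= n)%nat -> ThetaN xi n = 0) ->
  (forall xi eps, 0 < eps -> exists delta, 0 < delta /\
     forall xi', (forall j, (j < k)%nat -> Rabs (xi' j - xi j) < delta) ->
       forall n, (n < N)%nat -> Rabs (ThetaN xi' n - ThetaN xi n) < eps) ->
  (forall w, Att w ->
     ThetaN (fun j => F (S (INR j * tau) w)) = PN N (S (INR k * tau) w)) ->
  exists K0, forall K, K0 < K -> exists beta, 0 < beta /\
    (* beta independent of u and v *)
    forall u : R -> hseq,
    (* u is a complete trajectory on the attractor *)
    (forall s, Att (u s)) ->
    (forall s t, 0 <= t -> S t (u s) = u (t + s)) ->
    forall v : R -> hseq,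
      inH (v 0) ->
      is_solution lam alpha f g
        (fun s n => K * (PN N (v s) n
           - ThetaN (fun j => F (u (s - INR k * tau + INR j * tau))) n)) v ->
      forall t, 0 <= t ->
        normH (seq_sub (v t) (u t)) <= normH (seq_sub (v 0) (u 0)) * exp (- beta * t).
Proof.
  intros Hspec Halpha Hf Hlip _ _ HS [HattH _] HL _ Htau _ _ _ HTh.
  destruct (nudging_spectral_gap lam alpha L N Hspec Halpha HL)
    as [Lp [beta [HLp [HLLp [Hbeta Hgap]]]]].
  exists (lam N); intros K HK; exists beta; split; [exact Hbeta|].
  intros u Hu Hut v _ Hv t Ht.
  set (U := fun s => S s (u 0)).
  assert (HuU : forall s, 0 <= s -> u s = U s)
    by (intros s Hs; unfold U; rewrite Hut by exact Hs; f_equal; ring).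
  destruct (HS (u 0) (HattH _ (Hu 0))) as [_ HU].
  assert (Hv' : is_solution lam alpha f g (fun s n => K * PN N (seq_sub (v s) (U s)) n) v).
  { revert Hv; apply is_solution_forcing_ext; intros s n Hs.
    rewrite (attractor_feedback_eq S Att F ThetaN N k tau u Htau HTh Hu Hut), HuU by exact Hs.
    unfold PN, seq_sub; destruct (Nat.ltb n N); ring. }
  rewrite (HuU t Ht), (HuU 0 (Rle_refl 0)).
  exact (nudged_contraction lam alpha L f g N K (fun w Hw => proj1 (Hf w Hw)) Hlip v U Hv' HU
           Lp beta HLLp HLp Hbeta (Hgap K HK) t Ht).
Qed.
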